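(* Assume the Axiom of Choice. Let $X,Y$ be nonempty sets and $F\colon X^*\to Y$ a function. Suppose there exist an associative $\varepsilon$-standard operation $H\colon X^*\to X\cup\{\varepsilon\}$ and a one-to-one function $f\colon\mathrm{ran}(H^{\flat})\to Y$ such that $F^{\flat}=f\circ H^{\flat}$. Then the following are equivalent: (i) $F_1$ is one-to-one; (ii) $H_1$ is one-to-one; (iii) $H_1$ is the identity map on $X$.
   Context: $X^*=\bigcup_{n\geqslant 0}X^n$ is the set of finite tuples over $X$, $X^0=\{\varepsilon\}$ with $\varepsilon\notin X$ the empty tuple; concatenation with $\varepsilon$ leaves tuples unchanged. $F_n=F|_{X^n}$, $F^{\flat}=F|_{X^*\setminus\{\varepsilon\}}$. An operation $H\colon X^*\to X\cup\{\varepsilon\}$ is $\varepsilon$-standard if $H(\varepsilon)=\varepsilon$ and $H(\mathbf{x})=\varepsilon$ only for $\mathbf{x}=\varepsilon$. $H$ is associative if $H(\mathbf{x},\mathbf{y},\mathbf{z})=H(\mathbf{x},H(\mathbf{y}),\mathbf{z})$ for all $\mathbf{x},\mathbf{y},\mathbf{z}\in X^*$ (arguments denote concatenation; a value $\varepsilon$ is treated as the empty tuple). *)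

(* X^* is modelled as [list X]; X ∪ {ε} as [option X]
   with [None] playing the role of ε. *)
From Stdlib Require Export List.
Export ListNotations.

Definition otup {X : Type} (o : option X) : list X :=
  match o with Some a => [a] | None => [] end.

Definition eps_standard {X : Type} (H : list X -> option X) : Prop :=
  H [] = None /\ (forall x, H x = None -> x = []).

Definition associative_op {X : Type} (H : list X -> option X) : Prop :=
  forall x y z : list X, H (x ++ y ++ z) = H (x ++ otup (H y) ++ z).

Definition ran_flat {X : Type} (H : list X -> option X) (a : X) : Prop :=
  exists x, x <> [] /\ H x = Some a.

From Stdlib Require Import ProofIrrelevance.

(* Since F^flat = f o H^flat with f one-to-one, F_1 and H_1 identify the same
   letters, so (i) <-> (ii).  Associativity applied to a single letter gives
   H(a) = H(H(a)), i.e. H_1 is idempotent on its range; an injective idempotent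
   map is the identity, so (ii) -> (iii), and the converse is trivial. *)

Section Factorization.

Variables (X Y : Type) (F : list X -> Y) (H : list X -> option X).
Variable f : sig (ran_flat H) -> Y.
Hypothesis finj : forall a b : sig (ran_flat H), f a = f b -> a = b.
Hypothesis Hfact : forall (x : list X) (a : X) (hx : x <> []) (ha : H x = Some a),
  F x = f (exist (ran_flat H) a (ex_intro _ x (conj hx ha))).

Lemma factorization_eq_iff (x y : list X) (a b : X) :
  x <> [] -> y <> [] -> H x = Some a -> H y = Some b -> F x = F y <-> a = b.
Proof.
  intros hx hy ha hb; rewrite (Hfact x a hx ha), (Hfact y b hy hb); split.
  - intro E; apply finj in E; now injection E.
  - intros <-; f_equal; f_equal; apply proof_irrelevance.
Qed.

End Factorization.

Lemma eps_standard_singleton {X : Type} (H : list X -> option X) (a : X) :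
  eps_standard H -> exists b, H [a] = Some b.
Proof.
  intros [_ Hne]; destruct (H [a]) as [b|] eqn:E; [now exists b|].
  now apply Hne in E.
Qed.

Lemma associative_op_idem {X : Type} (H : list X -> option X) (y : list X) :
  associative_op H -> H (otup (H y)) = H y.
Proof.
  intro Hassoc; specialize (Hassoc [] y []); simpl in Hassoc.
  now rewrite !app_nil_r in Hassoc.
Qed.

Lemma injective_idem_singleton {X : Type} (H : list X -> option X) (a : X) :
  associative_op H -> eps_standard H ->
  (forall a b : X, H [a] = H [b] -> a = b) -> H [a] = Some a.
Proof.
  intros Hassoc Hstd Hinj.
  destruct (eps_standard_singleton H a Hstd) as [b Eb].
  assert (Eba : b = a).
  { apply Hinj. now rewrite <- (associative_op_idem H [a] Hassoc), Eb. }
  now subst b.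
Qed.

Theorem proposition4p4 (X Y : Type) (HX : inhabited X) (HY : inhabited Y)
  (F : list X -> Y) (H : list X -> option X) (f : sig (ran_flat H) -> Y)
  (Hstd : eps_standard H) (Hassoc : associative_op H)
  (finj : forall a b : sig (ran_flat H), f a = f b -> a = b)
  (Hfact : forall (x : list X) (a : X) (hx : x <> []) (ha : H x = Some a),
      F x = f (exist (ran_flat H) a (ex_intro _ x (conj hx ha)))) :
  ((forall a b : X, F [a] = F [b] -> a = b) <->
   (forall a b : X, H [a] = H [b] -> a = b)) /\
  ((forall a b : X, H [a] = H [b] -> a = b) <->
   (forall a : X, H [a] = Some a)).
Proof.
  assert (FH : forall a b : X, F [a] = F [b] <-> H [a] = H [b]).
  { intros a b.
    destruct (eps_standard_singleton H a Hstd) as [c Ec].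
    destruct (eps_standard_singleton H b Hstd) as [d Ed].
    rewrite (factorization_eq_iff X Y F H f finj Hfact [a] [b] c d
               ltac:(discriminate) ltac:(discriminate) Ec Ed), Ec, Ed.
    split; [now intros <- | congruence]. }
  split; split.
  - intros Finj a b E; apply Finj, FH, E.
  - intros Hinj a b E; apply Hinj, FH, E.
  - intros Hinj a; exact (injective_idem_singleton H a Hassoc Hstd Hinj).
  - intros Hid a b E; rewrite !Hid in E; congruence.
Qed.
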